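(* There is an absolute constant $c_0<10$ such that for each $b\in(0,\pi)$, each $n\in\mathbb{N}$ and every odd trigonometric polynomial $T_n\in\mathcal{T}_n$, $$\|T_n'\|_{[-b/2,b/2]}\le \frac{c_0}{b}\,n\,\|T_n\|_{[-b,b]}.$$
   Context: $\mathcal{T}_n$ is the space of real trigonometric polynomials $\alpha_0+\sum_{k=1}^n(\alpha_k\cos kt+\beta_k\sin kt)$ of degree $\le n$. For a function $g$ on $[a,b]$, $\|g\|_{[a,b]}:=\max_{x\in[a,b]}|g(x)|$. *)

From Stdlib Require Import Reals.
From Coquelicot Require Import Coquelicot.
Open Scope R_scope.

Fixpoint trig_sum (al be : nat -> R) (n : nat) (t : R) : R :=
  match n with
  | O => 0
  | S m => trig_sum al be m t + (al (S m) * cos (INR (S m) * t) + be (S m) * sin (INR (S m) * t))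
  end.

Definition in_Tn (n : nat) (f : R -> R) : Prop :=
  exists al be : nat -> R, forall t, f t = al 0%nat + trig_sum al be n t.

Definition odd_fun (f : R -> R) : Prop := forall t, f (- t) = - f t.

(* Bernstein's inequality [|T'| <= N sup |T|] on T_N follows from M. Riesz's
   interpolation formula [T' x = sum_k w_k (T (x + t_k) - T (x - t_k)) / 2] with nodes
   [t_k = (2k+1) PI / (2N)] and weights [w_k = (-1)^k / (4 N sin (t_k/2)^2)], k < 2N,
   whose absolute values sum to [N]; the formula amounts to [sum_k w_k sin (j t_k) = j]
   for [j <= N], obtained from second differences in [j].
   An odd [T] in T_n can be written [T t = cos (t/2) P (sin (t/2))] with [P] a polynomial.
   For [a = sin (b/2)], [G p = sin p * P (a cos p)] lies in T_(2n), and [|G| <= sup |T|]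
   over [[-b, b]] because [G p] is at most [T t] in absolute value at [t = 2 asin (a cos p)].
   Bernstein's inequality for [G] at [p = acos (sin (x/2) / a)] controls [P'(sin (x/2))],
   hence [T' x] for [|x| <= b/2]; the constant comes from [a >= 0.29 b]. *)

From Stdlib Require Import Reals Lra Lia.
From Coquelicot Require Import Coquelicot.
Open Scope R_scope.

Lemma sum_f_R0_telescope (F : nat -> R) (n : nat) :
  sum_f_R0 (fun k => F (S k) - F k) n = F (S n) - F O.
Proof. induction n as [|n IH]; simpl; [|rewrite IH]; ring. Qed.

Lemma neg1_pow_sq (k : nat) : (-1) ^ k * (-1) ^ k = 1.
Proof. rewrite <- pow_add; replace (k + k)%nat with (2 * k)%nat by lia; apply pow_1_even. Qed.

Lemma sin_odd_half_pi (k : nat) : sin (INR k * PI + PI / 2) = (-1) ^ k.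
Proof.
  induction k as [|k IH]; simpl pow.
  - rewrite Rmult_0_l, Rplus_0_l; apply sin_PI2.
  - replace (INR (S k) * PI + PI / 2) with (INR k * PI + PI / 2 + PI)
      by (rewrite S_INR; ring).
    rewrite neg_sin, IH; ring.
Qed.

Lemma cos_odd_half_pi (k : nat) : cos (INR k * PI + PI / 2) = 0.
Proof.
  induction k as [|k IH].
  - rewrite Rmult_0_l, Rplus_0_l; apply cos_PI2.
  - replace (INR (S k) * PI + PI / 2) with (INR k * PI + PI / 2 + PI)
      by (rewrite S_INR; ring).
    rewrite neg_cos, IH; ring.
Qed.

Section RieszInterpolation.

Variable N : nat.
Hypothesis N_pos : (1 <= N)%nat.

Definition riesz_node (k : nat) : R := (2 * INR k + 1) * PI / (2 * INR N).

Definition riesz_weight (k : nat) : R :=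
  (-1) ^ k / (4 * INR N * sin (riesz_node k / 2) ^ 2).

Definition riesz_sine_moment (j : nat) : R :=
  sum_f_R0 (fun k => riesz_weight k * sin (INR j * riesz_node k)) (2 * N - 1).

Lemma INR_N_ge1 : 1 <= INR N.
Proof. apply (le_INR 1); exact N_pos. Qed.

Lemma sin_half_riesz_node_pos (k : nat) :
  (k <= 2 * N - 1)%nat -> 0 < sin (riesz_node k / 2).
Proof.
  intros Hk. pose proof INR_N_ge1. pose proof PI_RGT_0. pose proof (pos_INR k).
  assert (Hk2 : INR k + 1 <= 2 * INR N).
  { pose proof (le_INR (S k) (2 * N) ltac:(lia)) as HSk.
    rewrite S_INR, mult_INR in HSk; simpl in HSk; lra. }
  unfold riesz_node.
  replace ((2 * INR k + 1) * PI / (2 * INR N) / 2)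
    with ((2 * INR k + 1) / (4 * INR N) * PI) by (field; lra).
  apply sin_gt_0.
  - apply Rmult_lt_0_compat; [apply Rdiv_lt_0_compat|]; lra.
  - rewrite <- (Rmult_1_l PI) at 2. apply Rmult_lt_compat_r; [lra|].
    apply (Rmult_lt_reg_r (4 * INR N)); [lra|]. field_simplify; lra.
Qed.

Lemma riesz_node_mul_N (k : nat) : INR N * riesz_node k = INR k * PI + PI / 2.
Proof. pose proof INR_N_ge1. unfold riesz_node. field. lra. Qed.

(* With [th = j PI / N], each term is [-1 / (2 cos (th/2))] times the increment of
   [k |-> (-1)^k sin (k th)], which vanishes at [k = 0] and [k = 2 N]. *)
Lemma alternating_sine_sum_lt (j : nat) : (j < N)%nat ->
  sum_f_R0 (fun k => (-1) ^ k * sin (INR j * riesz_node k)) (2 * N - 1) = 0.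
Proof.
  intros Hj. pose proof INR_N_ge1. pose proof PI_RGT_0. pose proof (pos_INR j).
  set (th := INR j * PI / INR N).
  set (F := fun k => (-1) ^ k * sin (INR k * th)).
  assert (Hcos : 0 < cos (th / 2)).
  { assert (INR j + 1 <= INR N) by (rewrite <- S_INR; apply le_INR; lia).
    replace (th / 2) with (INR j / (2 * INR N) * PI) by (unfold th; field; lra).
    apply cos_gt_0.
    - assert (0 <= INR j / (2 * INR N)) by (apply Rdiv_le_0_compat; lra). nra.
    - rewrite <- (Rmult_1_l PI) at 2. replace (1 * PI / 2) with (/ 2 * PI) by field.
      apply Rmult_lt_compat_r; [lra|].
      apply (Rmult_lt_reg_r (2 * INR N)); [lra|]. field_simplify; lra. }
  assert (Htele : sum_f_R0 (fun k => F (S k) - F k) (2 * N - 1) = 0).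
  { rewrite sum_f_R0_telescope. replace (S (2 * N - 1)) with (2 * N)%nat by lia.
    unfold F. replace (INR (2 * N) * th) with (0 + 2 * INR j * PI)
      by (rewrite mult_INR; unfold th; simpl; field; lra).
    rewrite sin_period; simpl; rewrite Rmult_0_l, sin_0; ring. }
  assert (Hterm : sum_f_R0 (fun k => F (S k) - F k) (2 * N - 1)
    = -2 * cos (th / 2)
      * sum_f_R0 (fun k => (-1) ^ k * sin (INR j * riesz_node k)) (2 * N - 1)).
  { rewrite scal_sum. apply sum_eq. intros k _. unfold F.
    replace (INR j * riesz_node k) with ((2 * INR k + 1) * th / 2)
      by (unfold riesz_node, th; field; lra).
    replace (INR (S k) * th) with ((2 * INR k + 1) * th / 2 + th / 2)
      by (rewrite S_INR; field).
    replace (INR k * th) with ((2 * INR k + 1) * th / 2 - th / 2) by field.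
    rewrite sin_plus, sin_minus; simpl pow; ring. }
  rewrite Htele in Hterm. symmetry in Hterm.
  apply Rmult_integral in Hterm as [Hc0 | HB]; lra.
Qed.

Lemma alternating_sine_sum_N :
  sum_f_R0 (fun k => (-1) ^ k * sin (INR N * riesz_node k)) (2 * N - 1) = 2 * INR N.
Proof.
  rewrite (sum_eq _ (fun _ => 1)).
  - rewrite sum_cte. replace (S (2 * N - 1)) with (2 * N)%nat by lia.
    rewrite mult_INR; simpl; ring.
  - intros k _. rewrite riesz_node_mul_N, sin_odd_half_pi. apply neg1_pow_sq.
Qed.

Lemma riesz_sine_moment_0 : riesz_sine_moment 0 = 0.
Proof.
  unfold riesz_sine_moment. rewrite (sum_eq _ (fun _ => 0)).
  - rewrite sum_cte; ring.
  - intros k _. rewrite Rmult_0_l, sin_0; ring.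
Qed.

Lemma riesz_sine_moment_second_difference (j : nat) :
  riesz_sine_moment (S (S j)) - 2 * riesz_sine_moment (S j) + riesz_sine_moment j
  = - / INR N * sum_f_R0 (fun k => (-1) ^ k * sin (INR (S j) * riesz_node k)) (2 * N - 1).
Proof.
  pose proof INR_N_ge1. unfold riesz_sine_moment.
  rewrite !scal_sum, <- minus_sum, <- plus_sum. apply sum_eq. intros k Hk.
  pose proof (sin_half_riesz_node_pos k Hk). unfold riesz_weight.
  set (t := riesz_node k) in *.
  replace (INR (S (S j)) * t) with (INR (S j) * t + 2 * (t / 2))
    by (rewrite !S_INR; field).
  replace (INR j * t) with (INR (S j) * t - 2 * (t / 2)) by (rewrite !S_INR; field).
  rewrite sin_plus, sin_minus, cos_2a_sin, sin_2a. field. lra.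
Qed.

Lemma riesz_weight_sin_N (k : nat) :
  riesz_weight k * sin (INR N * riesz_node k) = / (4 * INR N * sin (riesz_node k / 2) ^ 2).
Proof.
  unfold riesz_weight, Rdiv. rewrite riesz_node_mul_N, sin_odd_half_pi.
  rewrite Rmult_comm, <- Rmult_assoc, neg1_pow_sq. ring.
Qed.

Lemma riesz_sine_moment_succ_N : riesz_sine_moment (S N) = riesz_sine_moment N - 1.
Proof.
  pose proof INR_N_ge1. unfold riesz_sine_moment.
  transitivity (sum_f_R0 (fun k => riesz_weight k * sin (INR N * riesz_node k)
                                   + - / (2 * INR N)) (2 * N - 1)).
  - apply sum_eq. intros k Hk. pose proof (sin_half_riesz_node_pos k Hk).
    replace (INR (S N) * riesz_node k) with (INR N * riesz_node k + 2 * (riesz_node k / 2))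
      by (rewrite S_INR; field).
    rewrite sin_plus, Rmult_plus_distr_l, <- Rmult_assoc, riesz_weight_sin_N.
    rewrite riesz_node_mul_N, cos_odd_half_pi, cos_2a_sin.
    field. lra.
  - rewrite (plus_sum _ (fun _ => - / (2 * INR N))), sum_cte.
    replace (S (2 * N - 1)) with (2 * N)%nat by lia.
    rewrite mult_INR; simpl; field; lra.
Qed.

Lemma riesz_sine_moment_linear (j : nat) :
  (j <= N)%nat -> riesz_sine_moment j = INR j * riesz_sine_moment 1.
Proof.
  assert (Hpair : forall i, (S i <= N)%nat ->
    riesz_sine_moment i = INR i * riesz_sine_moment 1 /\
    riesz_sine_moment (S i) = INR (S i) * riesz_sine_moment 1).
  { induction i as [|i IH]; intros Hi.
    - rewrite riesz_sine_moment_0; simpl; split; ring.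
    - destruct (IH ltac:(lia)) as [Hi0 Hi1]. split; [exact Hi1|].
      pose proof (riesz_sine_moment_second_difference i) as Hd.
      rewrite alternating_sine_sum_lt, Hi0, Hi1 in Hd by lia.
      rewrite !S_INR in *. lra. }
  intros Hj. destruct j as [|j].
  - rewrite riesz_sine_moment_0; simpl; ring.
  - apply Hpair; lia.
Qed.

(* The second difference of the moments vanishes below [N] and jumps at [N];
   the explicit value of the moment at [S N] then pins down the slope. *)
Lemma riesz_sine_moment_1 : riesz_sine_moment 1 = 1.
Proof.
  pose proof INR_N_ge1.
  pose proof (riesz_sine_moment_second_difference (N - 1)) as Hd.
  replace (S (N - 1)) with N in Hd by lia.
  rewrite alternating_sine_sum_N, riesz_sine_moment_succ_N in Hd.
  rewrite (riesz_sine_moment_linear N), (riesz_sine_moment_linear (N - 1)) in Hd by lia.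
  rewrite minus_INR in Hd by lia. simpl INR in Hd.
  replace (- / INR N * (2 * INR N)) with (-2) in Hd by (field; lra). lra.
Qed.

Lemma riesz_sine_moment_eq (j : nat) : (j <= N)%nat -> riesz_sine_moment j = INR j.
Proof. intros Hj. rewrite riesz_sine_moment_linear, riesz_sine_moment_1 by exact Hj. ring. Qed.

Lemma riesz_weight_abs_sum :
  sum_f_R0 (fun k => Rabs (riesz_weight k)) (2 * N - 1) = INR N.
Proof.
  pose proof INR_N_ge1.
  rewrite <- (riesz_sine_moment_eq N (le_n N)). apply sum_eq. intros k Hk.
  pose proof (sin_half_riesz_node_pos k Hk).
  rewrite riesz_weight_sin_N. unfold riesz_weight, Rdiv.
  rewrite Rabs_mult, pow_1_abs, Rabs_inv, Rabs_pos_eq by nra. ring.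
Qed.

(* Through the symmetric difference only the sine moments of the weights enter. *)
Definition riesz_sum (f : R -> R) (x : R) : R :=
  sum_f_R0 (fun k => riesz_weight k * ((f (x + riesz_node k) - f (x - riesz_node k)) / 2))
    (2 * N - 1).

Lemma riesz_sum_abs_le (f : R -> R) (x M : R) :
  (forall y, Rabs (f y) <= M) -> Rabs (riesz_sum f x) <= INR N * M.
Proof.
  intros Hf. unfold riesz_sum. eapply Rle_trans; [apply sum_f_R0_triangle|].
  rewrite <- riesz_weight_abs_sum, Rmult_comm, scal_sum. apply sum_Rle. intros k _.
  rewrite Rabs_mult. apply Rmult_le_compat_l; [apply Rabs_pos|].
  pose proof (Hf (x + riesz_node k)) as H1. pose proof (Hf (x - riesz_node k)) as H2.
  apply Rabs_le_between in H1, H2. apply Rabs_le_between. lra.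
Qed.

Lemma trig_sum_riesz_formula (al be : nat -> R) (m : nat) (x : R) :
  (m <= N)%nat -> is_derive (trig_sum al be m) x (riesz_sum (trig_sum al be m) x).
Proof.
  induction m as [|m IH]; intros Hm.
  - unfold riesz_sum; cbn [trig_sum].
    rewrite (sum_eq _ (fun _ => 0)), sum_cte, Rmult_0_l by (intros; field).
    exact (is_derive_const 0 x).
  - set (j := INR (S m)).
    set (g := be (S m) * cos (j * x) - al (S m) * sin (j * x)).
    assert (Hsplit : riesz_sum (trig_sum al be (S m)) x
                     = riesz_sum (trig_sum al be m) x + g * riesz_sine_moment (S m)).
    { unfold riesz_sum, riesz_sine_moment. rewrite scal_sum, <- plus_sum.
      apply sum_eq. intros k _. cbn [trig_sum]. fold j.
      replace (j * (x + riesz_node k)) with (j * x + j * riesz_node k) by ring.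
      replace (j * (x - riesz_node k)) with (j * x - j * riesz_node k) by ring.
      rewrite cos_plus, cos_minus, sin_plus, sin_minus. unfold g. field. }
    assert (Hharm : is_derive (fun t => al (S m) * cos (j * t) + be (S m) * sin (j * t))
                      x (g * j)).
    { auto_derive; [auto|]. unfold g; ring. }
    rewrite Hsplit, riesz_sine_moment_eq by lia.
    exact (is_derive_plus _ _ x _ _ (IH ltac:(lia)) Hharm).
Qed.

Lemma riesz_interpolation (T : R -> R) (x : R) :
  in_Tn N T -> is_derive T x (riesz_sum T x).
Proof.
  intros [al [be HT]].
  assert (Hsum : riesz_sum T x = 0 + riesz_sum (trig_sum al be N) x).
  { unfold riesz_sum. rewrite Rplus_0_l. apply sum_eq. intros k _. rewrite !HT. field. }
  rewrite Hsum. apply (is_derive_ext (fun t => al O + trig_sum al be N t)); [auto|].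
  exact (is_derive_plus _ _ x _ _ (is_derive_const (al O) x)
           (trig_sum_riesz_formula al be N x (le_n N))).
Qed.

End RieszInterpolation.

Lemma Derive_in_T0 (T : R -> R) (x : R) : in_Tn 0 T -> Derive T x = 0.
Proof.
  intros [al [be HT]]. rewrite (Derive_ext T (fun _ => al O)), Derive_const; [easy|].
  intros t. rewrite HT. simpl; ring.
Qed.

Theorem bernstein_inequality (N : nat) (T : R -> R) (M x : R) :
  in_Tn N T -> (forall y, Rabs (T y) <= M) -> Rabs (Derive T x) <= INR N * M.
Proof.
  intros HT HM. destruct N as [|N].
  - rewrite (Derive_in_T0 T x HT), Rabs_R0. simpl; lra.
  - assert (HN : (1 <= S N)%nat) by lia.
    rewrite (is_derive_unique T x _ (riesz_interpolation (S N) HN T x HT)).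
    exact (riesz_sum_abs_le (S N) HN T x M HM).
Qed.

Lemma trig_sum_ext (al be al' be' : nat -> R) (N : nat) (t : R) :
  (forall i, (i <= N)%nat -> al' i = al i /\ be' i = be i) ->
  trig_sum al' be' N t = trig_sum al be N t.
Proof.
  induction N as [|N IH]; intros H; cbn [trig_sum]; [reflexivity|].
  rewrite IH by (intros; apply H; lia).
  destruct (H (S N) (le_n _)) as [-> ->]; reflexivity.
Qed.

Lemma trig_sum_lin (al be al' be' : nat -> R) (c d : R) (N : nat) (t : R) :
  trig_sum (fun i => c * al i + d * al' i) (fun i => c * be i + d * be' i) N t
  = c * trig_sum al be N t + d * trig_sum al' be' N t.
Proof. induction N as [|N IH]; cbn [trig_sum]; [|rewrite IH]; ring. Qed.

Lemma in_Tn_ext (N : nat) (f g : R -> R) :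
  (forall t, f t = g t) -> in_Tn N f -> in_Tn N g.
Proof. intros Hfg [al [be Hf]]. exists al, be. intros t. rewrite <- Hfg; apply Hf. Qed.

Lemma in_Tn_lin (N : nat) (f g : R -> R) (c d : R) :
  in_Tn N f -> in_Tn N g -> in_Tn N (fun t => c * f t + d * g t).
Proof.
  intros [al [be Hf]] [al' [be' Hg]].
  exists (fun i => c * al i + d * al' i), (fun i => c * be i + d * be' i).
  intros t. rewrite trig_sum_lin, Hf, Hg. ring.
Qed.

Lemma in_Tn_add (N : nat) (f g : R -> R) :
  in_Tn N f -> in_Tn N g -> in_Tn N (fun t => f t + g t).
Proof.
  intros Hf Hg. apply (in_Tn_ext _ (fun t => 1 * f t + 1 * g t)); [intros; ring|].
  now apply in_Tn_lin.
Qed.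

Lemma in_Tn_const (c : R) : in_Tn 0 (fun _ => c).
Proof. exists (fun _ => c), (fun _ => 0). intros t; simpl; ring. Qed.

Lemma in_Tn_succ (N : nat) (f : R -> R) (al1 be1 : R) : in_Tn N f ->
  in_Tn (S N) (fun t => f t + (al1 * cos (INR (S N) * t) + be1 * sin (INR (S N) * t))).
Proof.
  intros [al [be Hf]].
  exists (fun i => if (i <=? N)%nat then al i else al1),
         (fun i => if (i <=? N)%nat then be i else be1).
  intros t. cbn [trig_sum]. rewrite (trig_sum_ext al be), Hf.
  - replace (S N <=? N)%nat with false by (symmetry; apply Nat.leb_gt; lia).
    simpl; ring.
  - intros i Hi. rewrite (proj2 (Nat.leb_le i N) Hi). auto.
Qed.

Lemma in_Tn_mono (N N' : nat) (f : R -> R) : (N <= N')%nat -> in_Tn N f -> in_Tn N' f.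
Proof.
  induction 1 as [|N' _ IH]; [auto|]. intros Hf.
  apply (in_Tn_ext _ (fun t => f t + (0 * cos (INR (S N') * t) + 0 * sin (INR (S N') * t)))).
  - intros; ring.
  - apply in_Tn_succ; auto.
Qed.

Lemma in_Tn_harmonic (N k : nat) (al1 be1 : R) : (k <= N)%nat ->
  in_Tn N (fun t => al1 * cos (INR k * t) + be1 * sin (INR k * t)).
Proof.
  intros Hk. apply (in_Tn_mono k); [exact Hk|]. destruct k as [|k].
  - apply (in_Tn_ext _ (fun _ => al1)); [|apply in_Tn_const].
    intros t. simpl. rewrite Rmult_0_l, cos_0, sin_0. ring.
  - apply (in_Tn_ext _ (fun t => 0 + (al1 * cos (INR (S k) * t) + be1 * sin (INR (S k) * t)))).
    + intros; ring.
    + apply in_Tn_succ, (in_Tn_mono 0); [lia|apply in_Tn_const].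
Qed.

Lemma in_Tn_cos_mul (N : nat) (f : R -> R) : in_Tn N f -> in_Tn (S N) (fun t => cos t * f t).
Proof.
  intros [al [be Hf]].
  apply (in_Tn_ext _ (fun t => cos t * (al O + trig_sum al be N t))).
  { intros t. rewrite Hf. reflexivity. }
  clear f Hf. induction N as [|N IH].
  - apply (in_Tn_ext _ (fun t => al O * cos (INR 1 * t) + 0 * sin (INR 1 * t))).
    + intros t. simpl. rewrite Rmult_1_l. ring.
    + now apply in_Tn_harmonic.
  - set (al1 := al (S N)). set (be1 := be (S N)).
    apply (in_Tn_ext _ (fun t => cos t * (al O + trig_sum al be N t)
      + ((al1 / 2 * cos (INR (S (S N)) * t) + be1 / 2 * sin (INR (S (S N)) * t))
         + (al1 / 2 * cos (INR N * t) + be1 / 2 * sin (INR N * t))))).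
    + intros t. cbn [trig_sum]. fold al1 be1.
      replace (INR (S (S N)) * t) with (INR (S N) * t + t) by (rewrite !S_INR; ring).
      replace (INR N * t) with (INR (S N) * t - t) by (rewrite !S_INR; ring).
      rewrite cos_plus, cos_minus, sin_plus, sin_minus. field.
    + apply in_Tn_add; [exact (in_Tn_mono (S N) _ _ (le_S _ _ (le_n _)) IH)|].
      apply in_Tn_add; apply in_Tn_harmonic; lia.
Qed.

Lemma nat_pair_ind (P : nat -> Prop) :
  P O -> P 1%nat -> (forall k, P k -> P (S k) -> P (S (S k))) -> forall k, P k.
Proof. intros; apply Nat.pair_induction; auto. intros ? ? ->; reflexivity. Qed.

(* The recurrence comes from [sin ((k+2) t) = 2 cos t sin ((k+1) t) - sin (k t)]
   and [cos t = 1 - 2 sin (t/2)^2]. *)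
Fixpoint half_sin_poly (k : nat) (x : R) : R :=
  match k with
  | O => 0
  | S O => 2 * x
  | S ((S k'') as k') => 2 * (1 - 2 * x * x) * half_sin_poly k' x - half_sin_poly k'' x
  end.

Lemma half_sin_poly_SS (k : nat) (x : R) :
  half_sin_poly (S (S k)) x
  = 2 * (1 - 2 * x * x) * half_sin_poly (S k) x - half_sin_poly k x.
Proof. reflexivity. Qed.

Lemma sin_mult_half_sin_poly (k : nat) (t : R) :
  sin (INR k * t) = cos (t / 2) * half_sin_poly k (sin (t / 2)).
Proof.
  revert t. induction k as [| |k IH0 IH1] using nat_pair_ind; intros t.
  - simpl. rewrite Rmult_0_l, sin_0. ring.
  - simpl. rewrite Rmult_1_l. replace t with (2 * (t / 2)) at 1 by field.
    rewrite sin_2a. ring.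
  - rewrite half_sin_poly_SS. set (s := sin (t / 2)).
    replace (cos (t / 2) * (2 * (1 - 2 * s * s) * half_sin_poly (S k) s - half_sin_poly k s))
      with (2 * (1 - 2 * s * s) * (cos (t / 2) * half_sin_poly (S k) s)
            - cos (t / 2) * half_sin_poly k s) by ring.
    unfold s. rewrite <- IH0, <- IH1, <- cos_2a_sin.
    replace (2 * (t / 2)) with t by field.
    replace (INR (S (S k)) * t) with (INR (S k) * t + t) by (rewrite !S_INR; ring).
    replace (INR k * t) with (INR (S k) * t - t) by (rewrite !S_INR; ring).
    rewrite sin_plus, sin_minus. ring.
Qed.

Lemma ex_derive_half_sin_poly (k : nat) (x : R) : ex_derive (half_sin_poly k) x.
Proof.
  revert x. induction k as [| |k IH0 IH1] using nat_pair_ind; intros x.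
  - apply ex_derive_const.
  - apply ex_derive_scal, ex_derive_id.
  - apply (ex_derive_ext (fun y => 2 * (1 - 2 * y * y) * half_sin_poly (S k) y
                                   - half_sin_poly k y)); [easy|].
    auto_derive. auto.
Qed.

Definition compressed_profile (a : R) (P : R -> R) (p : R) : R := sin p * P (a * cos p).

Lemma half_sin_poly_compressed_in_Tn (k : nat) (a : R) :
  in_Tn (2 * k) (compressed_profile a (half_sin_poly k)).
Proof.
  unfold compressed_profile.
  induction k as [| |k IH0 IH1] using nat_pair_ind.
  - apply (in_Tn_ext _ (fun _ => 0)); [intros; simpl; ring|apply in_Tn_const].
  - apply (in_Tn_ext _ (fun p => 0 * cos (INR 2 * p) + a * sin (INR 2 * p))).
    + intros p. simpl. replace ((1 + 1) * p) with (2 * p) by ring. rewrite sin_2a. ring.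
    + apply in_Tn_harmonic; lia.
  - set (Q := fun p => sin p * half_sin_poly (S k) (a * cos p)).
    apply (in_Tn_ext _ (fun p => 1 * (2 * Q p - 4 * a ^ 2 * (cos p * (cos p * Q p)))
                                 + (-1) * (sin p * half_sin_poly k (a * cos p)))).
    + intros p. unfold Q. rewrite half_sin_poly_SS. ring.
    + apply in_Tn_lin; [|apply (in_Tn_mono (2 * k)); [lia|exact IH0]].
      apply (in_Tn_ext _ (fun p => 2 * Q p + (- 4 * a ^ 2) * (cos p * (cos p * Q p))));
        [intros; ring|].
      apply in_Tn_lin; [apply (in_Tn_mono (2 * S k)); [lia|exact IH1]|].
      replace (2 * S (S k))%nat with (S (S (2 * S k))) by lia.
      now apply in_Tn_cos_mul, in_Tn_cos_mul.
Qed.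

Definition half_sin_series (be : nat -> R) (n : nat) (x : R) : R :=
  sum_f_R0 (fun j => be j * half_sin_poly j x) n.

Lemma trig_sum_sub_opp (al be : nat -> R) (n : nat) (t : R) :
  trig_sum al be n t - trig_sum al be n (- t)
  = 2 * (cos (t / 2) * half_sin_series be n (sin (t / 2))).
Proof.
  induction n as [|n IH]; unfold half_sin_series in *.
  - simpl. ring.
  - cbn [trig_sum]. rewrite tech5, Rmult_plus_distr_l, Rmult_plus_distr_l, <- IH.
    replace (INR (S n) * - t) with (- (INR (S n) * t)) by ring.
    rewrite cos_neg, sin_neg, sin_mult_half_sin_poly. ring.
Qed.

Lemma odd_in_Tn_half_angle_form (n : nat) (T : R -> R) : in_Tn n T -> odd_fun T ->
  exists be, forall t, T t = cos (t / 2) * half_sin_series be n (sin (t / 2)).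
Proof.
  intros [al [be HT]] Hodd. exists be. intros t.
  replace (T t) with ((T t - T (- t)) / 2) by (rewrite Hodd; field).
  rewrite !HT.
  replace (al O + trig_sum al be n t - (al O + trig_sum al be n (- t)))
    with (trig_sum al be n t - trig_sum al be n (- t)) by ring.
  rewrite trig_sum_sub_opp. field.
Qed.

Lemma ex_derive_half_sin_series (be : nat -> R) (n : nat) (x : R) :
  ex_derive (half_sin_series be n) x.
Proof.
  induction n as [|n IH].
  - apply ex_derive_scal, ex_derive_half_sin_poly.
  - apply (ex_derive_ext (fun y => half_sin_series be n y + be (S n) * half_sin_poly (S n) y));
      [easy|].
    exact (ex_derive_plus _ (fun y => be (S n) * half_sin_poly (S n) y) x IH
             (ex_derive_scal _ _ x (ex_derive_half_sin_poly (S n) x))).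
Qed.

Lemma half_sin_series_compressed_in_Tn (be : nat -> R) (n : nat) (a : R) :
  in_Tn (2 * n) (compressed_profile a (half_sin_series be n)).
Proof.
  induction n as [|n IH].
  - apply (in_Tn_ext _ (fun _ => 0)); [|apply in_Tn_const].
    intros p. unfold compressed_profile, half_sin_series. simpl. ring.
  - apply (in_Tn_ext _ (fun p => 1 * compressed_profile a (half_sin_series be n) p
                                 + be (S n) * compressed_profile a (half_sin_poly (S n)) p)).
    + intros p. unfold compressed_profile, half_sin_series. rewrite tech5. ring.
    + apply in_Tn_lin; [apply (in_Tn_mono (2 * n)); [lia|exact IH]|].
      apply half_sin_poly_compressed_in_Tn.
Qed.

Lemma Derive_half_angle_form (T P : R -> R) (x : R) :
  (forall t, T t = cos (t / 2) * P (sin (t / 2))) -> (forall z, ex_derive P z) ->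
  Derive T x = - (1 / 2) * sin (x / 2) * P (sin (x / 2))
               + 1 / 2 * (1 - sin (x / 2) ^ 2) * Derive P (sin (x / 2)).
Proof.
  intros HT HP. rewrite (Derive_ext T (fun t => cos (t / 2) * P (sin (t / 2)))) by exact HT.
  replace (1 - sin (x / 2) ^ 2) with (cos (x / 2) ^ 2)
    by (pose proof (sin2_cos2 (x / 2)) as E; unfold Rsqr in E; simpl; lra).
  apply is_derive_unique. auto_derive; [apply HP|].
  change (x * / 2) with (x / 2).
  change (Derive (fun t => P t) (sin (x / 2))) with (Derive P (sin (x / 2))). field.
Qed.

(* With [z = sin (b/2) cos p], the point [2 asin z] lies in [[-b, b]] and
   [T (2 asin z) = sqrt (1 - z^2) P z], while [|sin p| <= sqrt (1 - z^2)]. *)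
Lemma compressed_profile_bound (b M : R) (T P : R -> R) :
  0 <= b <= PI -> (forall t, T t = cos (t / 2) * P (sin (t / 2))) ->
  (forall y, - b <= y <= b -> Rabs (T y) <= M) ->
  forall p, Rabs (compressed_profile (sin (b / 2)) P p) <= M.
Proof.
  intros Hb HT HM p. unfold compressed_profile.
  set (a := sin (b / 2)). set (z := a * cos p).
  assert (Ha : 0 <= a <= 1).
  { split; [apply sin_ge_0; lra|apply SIN_bound]. }
  pose proof (COS_bound p).
  assert (Hz2 : z ^ 2 <= cos p ^ 2).
  { unfold z. rewrite Rpow_mult_distr. rewrite <- (Rmult_1_l (cos p ^ 2)) at 2.
    apply Rmult_le_compat_r; [apply pow2_ge_0|nra]. }
  assert (Hz : -1 <= z <= 1) by nra.
  pose proof (asin_bound z).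
  assert (Hasin : - (b / 2) <= asin z <= b / 2).
  { split; apply sin_incr_0; try lra; rewrite sin_asin by exact Hz;
      [rewrite sin_neg|]; fold a; unfold z; nra. }
  specialize (HM (2 * asin z) ltac:(lra)).
  rewrite HT in HM. replace (2 * asin z / 2) with (asin z) in HM by field.
  rewrite cos_asin, sin_asin, Rabs_mult, Rabs_pos_eq in HM by (auto; apply sqrt_pos).
  rewrite Rabs_mult. eapply Rle_trans; [|exact HM].
  apply Rmult_le_compat_r; [apply Rabs_pos|].
  rewrite <- sqrt_Rsqr_abs. apply sqrt_le_1_alt.
  pose proof (sin2_cos2 p). unfold Rsqr in *. nra.
Qed.

Lemma is_derive_compressed_profile_acos (a y : R) (P : R -> R) :
  -1 <= y <= 1 -> (forall z, ex_derive P z) ->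
  is_derive (compressed_profile a P) (acos y)
    (y * P (a * y) - a * (1 - y ^ 2) * Derive P (a * y)).
Proof.
  intros Hy HP. unfold compressed_profile. auto_derive; [apply HP|].
  rewrite cos_acos, sin_acos by exact Hy.
  change (Derive (fun t => P t) (a * y)) with (Derive P (a * y)).
  pose proof (sqrt_sqrt (1 - y²) ltac:(unfold Rsqr; nra)) as E. unfold Rsqr in *.
  replace (1 - y ^ 2) with (sqrt (1 - y * y) * sqrt (1 - y * y)) by (rewrite E; ring).
  ring.
Qed.

Lemma compressed_profile_estimates (b M y : R) (n : nat) (T : R -> R) (be : nat -> R) :
  0 < b < PI -> (forall t, T t = cos (t / 2) * half_sin_series be n (sin (t / 2))) ->
  (forall z, - b <= z <= b -> Rabs (T z) <= M) -> -1 <= y <= 1 ->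
  Rabs (sqrt (1 - y ^ 2) * half_sin_series be n (sin (b / 2) * y)) <= M
  /\ Rabs (y * half_sin_series be n (sin (b / 2) * y)
           - sin (b / 2) * (1 - y ^ 2) * Derive (half_sin_series be n) (sin (b / 2) * y))
     <= 2 * INR n * M.
Proof.
  intros Hb Hrep HM Hy.
  pose proof (compressed_profile_bound b M T _ ltac:(lra) Hrep HM) as Hbound.
  split.
  - specialize (Hbound (acos y)). unfold compressed_profile in Hbound.
    rewrite cos_acos, sin_acos in Hbound by exact Hy.
    replace (y ^ 2) with y² by (unfold Rsqr; ring). exact Hbound.
  - rewrite <- (is_derive_unique _ _ _
      (is_derive_compressed_profile_acos _ y _ Hy (ex_derive_half_sin_series be n))).
    replace (2 * INR n) with (INR (2 * n)) by (rewrite mult_INR; simpl INR at 1; ring).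
    apply bernstein_inequality; [apply half_sin_series_compressed_in_Tn|exact Hbound].
Qed.

Lemma cos_quarter_sq_ge (b : R) : 0 <= b <= PI -> 1 / 2 <= cos (b / 4) ^ 2.
Proof.
  intros Hb. assert (Hc : 0 <= cos (2 * (b / 4))) by (apply cos_ge_0; lra).
  rewrite cos_2a_cos in Hc. simpl. lra.
Qed.

Lemma sin_half_ge (b : R) : 0 < b < PI -> 0.29 * b <= sin (b / 2).
Proof.
  intros Hb. pose proof PI_4.
  set (u := b / 4).
  assert (Hsin : 5 / 6 * u <= sin u).
  { assert (Hu : 0 <= u <= 1) by (unfold u; lra).
    pose proof (sin_bound u 0 ltac:(lra) ltac:(unfold u; lra)) as [Hlb _].
    unfold sin_approx, sin_term in Hlb. simpl in Hlb.
    assert (u * (u * (u * 1)) <= u) by nra. lra. }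
  assert (Hcos : 0.7 <= cos u).
  { pose proof (cos_quarter_sq_ge b ltac:(lra)) as Hc2. fold u in Hc2.
    assert (0 < cos u) by (apply cos_gt_0; unfold u; lra). nra. }
  replace (b / 2) with (2 * u) by (unfold u; field).
  assert (0 <= sin u * (cos u - 0.7)) by (apply Rmult_le_pos; unfold u in *; lra).
  rewrite sin_2a. unfold u in *. lra.
Qed.

(* [sin (b/2) = 2 sin (b/4) cos (b/4)] and [|sin (x/2)| <= sin (b/4)] give
   [4 c^2 y^2 <= 1] for [c = cos (b/4)]; the last bound then reduces to
   [(3 c^2 - 1) (c^2 - 1) <= 0]. *)
Lemma half_angle_ratio_bounds (b x y : R) : 0 < b < PI -> - (b / 2) <= x <= b / 2 ->
  sin (b / 2) * y = sin (x / 2) ->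
  Rabs (sin (x / 2)) <= b / 4 /\ y ^ 2 <= 1 / 2
  /\ 3 * (1 - sin (x / 2) ^ 2) <= 4 * (1 - y ^ 2).
Proof.
  intros Hb Hx Hy. pose proof PI_4.
  pose proof (cos_quarter_sq_ge b ltac:(lra)) as Hc2.
  set (sg := sin (b / 4)) in *. set (c := cos (b / 4)) in *. set (x0 := sin (x / 2)) in *.
  assert (Hsg : 0 < sg) by (apply sin_gt_0; lra).
  assert (Hsgb : sg <= b / 4) by (left; apply sin_lt_x; lra).
  assert (Hc : 0 < c) by (apply cos_gt_0; lra).
  assert (Hsc : sg ^ 2 + c ^ 2 = 1).
  { pose proof (sin2_cos2 (b / 4)) as E. unfold Rsqr in E. unfold sg, c. simpl. lra. }
  assert (Hxy : x0 = 2 * sg * c * y).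
  { rewrite <- Hy. unfold sg, c. rewrite <- sin_2a. do 2 f_equal. field. }
  assert (Hx0 : - sg <= x0 <= sg).
  { unfold sg, x0. rewrite <- sin_neg. split; apply sin_incr_1; lra. }
  assert (Hcy : 4 * c ^ 2 * y ^ 2 <= 1).
  { assert (E : sg ^ 2 * (4 * c ^ 2 * y ^ 2) = x0 ^ 2) by (rewrite Hxy; ring).
    apply Rmult_le_reg_l with (sg ^ 2); [nra|]. rewrite E. nra. }
  assert (Hy0 : 0 <= y ^ 2) by apply pow2_ge_0.
  assert (Hx02 : x0 ^ 2 = 4 * (1 - c ^ 2) * c ^ 2 * y ^ 2).
  { replace (1 - c ^ 2) with (sg ^ 2) by lra. rewrite Hxy. ring. }
  repeat split.
  - apply Rabs_le. lra.
  - nra.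
  - rewrite Hx02. assert (4 - 12 * c ^ 2 + 12 * c ^ 4 <= 4 * c ^ 2) by nra. nra.
Qed.

Lemma half_angle_derivative_estimate (n b M a x0 y s v d : R) :
  1 <= n -> 0 < b <= 4 -> 0 <= M -> 0.29 * b <= a -> Rabs x0 <= b / 4 ->
  y ^ 2 <= 1 / 2 -> 3 * (1 - x0 ^ 2) <= 4 * (1 - y ^ 2) ->
  0 < s -> s ^ 2 = 1 - y ^ 2 ->
  Rabs (s * v) <= M -> Rabs (y * v - a * (1 - y ^ 2) * d) <= 2 * n * M ->
  Rabs (- (1 / 2) * x0 * v + (1 / 2) * (1 - x0 ^ 2) * d) <= 9.9 / b * n * M.
Proof.
  intros Hn Hb HM Ha Hx0 Hy2 H43 Hs Hs2 Hv Hd. rewrite <- Hs2 in H43, Hd.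
  assert (Hs7 : 0.7 <= s) by nra.
  rewrite Rabs_mult, (Rabs_pos_eq s) in Hv by lra.
  assert (Hv7 : 0.7 * Rabs v <= M) by (pose proof (Rabs_pos v); nra).
  assert (Hys : Rabs y <= s) by (apply Rabs_le; nra).
  assert (Hyv : Rabs (y * v) <= M)
    by (rewrite Rabs_mult; pose proof (Rabs_pos v); pose proof (Rabs_pos y); nra).
  assert (Had : a * s ^ 2 * Rabs d <= 3 * n * M).
  { replace (a * s ^ 2 * Rabs d) with (Rabs (y * v - (y * v - a * s ^ 2 * d))).
    - eapply Rle_trans; [apply Rabs_triang|]. rewrite Rabs_Ropp. nra.
    - replace (y * v - (y * v - a * s ^ 2 * d)) with (a * s ^ 2 * d) by ring.
      rewrite Rabs_mult, Rabs_pos_eq; [reflexivity|]. nra. }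
  assert (Hx01 : 0 <= 1 - x0 ^ 2).
  { apply Rabs_le_between in Hx0. nra. }
  assert (Hterm1 : b * (1 / 2 * (Rabs x0 * Rabs v)) <= 2.86 * n * M).
  { pose proof (Rabs_pos x0). pose proof (Rabs_pos v).
    assert (b * Rabs x0 <= 4) by nra.
    assert (b * Rabs x0 * Rabs v <= 4 * Rabs v) by nra.
    assert (M <= n * M) by nra. nra. }
  assert (Hterm2 : b * (1 / 2 * ((1 - x0 ^ 2) * Rabs d)) <= 6.9 * n * M).
  { pose proof (Rabs_pos d).
    assert ((1 - x0 ^ 2) * Rabs d <= 4 / 3 * (s ^ 2 * Rabs d)) by nra.
    assert (0 <= s ^ 2 * Rabs d) by (apply Rmult_le_pos; [apply pow2_ge_0|auto]).
    assert (0.29 * b * (s ^ 2 * Rabs d) <= 3 * n * M) by nra.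
    nra. }
  apply (Rmult_le_reg_l b); [lra|].
  replace (b * (9.9 / b * n * M)) with (9.9 * n * M) by (field; lra).
  eapply Rle_trans; [apply Rmult_le_compat_l; [lra|apply Rabs_triang]|].
  rewrite !Rabs_mult, Rabs_Ropp, (Rabs_pos_eq (1 / 2)), (Rabs_pos_eq (1 - x0 ^ 2)) by lra.
  nra.
Qed.

Theorem lemma3p1 :
  exists c0 : R, c0 < 10 /\
    forall (b : R) (n : nat) (T : R -> R),
      0 < b < PI -> in_Tn n T -> odd_fun T ->
      forall M : R, (forall y, -b <= y <= b -> Rabs (T y) <= M) ->
      forall x, -(b/2) <= x <= b/2 ->
        Rabs (Derive T x) <= c0 / b * INR n * M.
Proof.
  exists 9.9. split; [lra|].
  intros b n T Hb HT Hodd M HM x Hx.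
  assert (HM0 : 0 <= M) by (pose proof (HM 0 ltac:(lra)); pose proof (Rabs_pos (T 0)); lra).
  destruct n as [|n]; [rewrite (Derive_in_T0 T x HT), Rabs_R0; simpl; lra|].
  destruct (odd_in_Tn_half_angle_form _ T HT Hodd) as [be Hrep].
  pose proof (sin_half_ge b Hb) as Ha.
  set (y := sin (x / 2) / sin (b / 2)).
  assert (Hay : sin (b / 2) * y = sin (x / 2)) by (unfold y; field; lra).
  destruct (half_angle_ratio_bounds b x y Hb Hx Hay) as (Hx0 & Hy2 & H43).
  assert (Hy : -1 <= y <= 1) by (split; nra).
  destruct (compressed_profile_estimates b M y (S n) T be Hb Hrep HM Hy) as [Hv Hd].
  rewrite Hay in Hv, Hd.
  rewrite (Derive_half_angle_form T _ x Hrep (ex_derive_half_sin_series be (S n))).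
  apply (half_angle_derivative_estimate _ _ _ (sin (b / 2)) _ y (sqrt (1 - y ^ 2))); auto.
  - rewrite S_INR. pose proof (pos_INR n). lra.
  - pose proof PI_4. lra.
  - apply sqrt_lt_R0. nra.
  - apply pow2_sqrt. nra.
Qed.
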